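(* The sequence $\{\rho^m(S(i))\}$, where $i$ ranges over the integers $i\ge 7$ with $i\equiv 3\pmod 4$, is unbounded. In particular, $\rho^m(\mathfrak{N})=\infty$.
   Context: $\mathbb{N}$ denotes the non-negative integers. A numerical semigroup is a submonoid of $(\mathbb{N},+)$ with finite complement; $\mathfrak{N}$ denotes the set of all numerical semigroups. A numerical semigroup is irreducible if it cannot be written as the intersection of two numerical semigroups properly containing it. For an odd integer $j\ge 3$, $T(j)=\{0,\tfrac{j+1}{2},\tfrac{j+1}{2}+1,\dots,j-1\}\cup\{n\in\mathbb{Z}:n\ge j+1\}$. For odd $i\ge5$, $S(i)=\langle 2,i\rangle\cap T(i)$, where $\langle 2,i\rangle=\{2x+iy:x,y\in\mathbb{N}\}$. Given a numerical semigroup $S$ and irreducible numerical semigroups $S_1,\dots,S_n$, the expression $S_1\cap\dots\cap S_n$ is a factorization of $S$ (of length $n$) if $S=S_1\cap\dots\cap S_n$ and $S\neq\bigcap_{j\in J}S_j$ for every nonempty proper subset $J\subsetneq\{1,\dots,n\}$. $\mathsf{L}^m(S)$ is the set of positive integers $n$ such that $S$ has a factorization of length $n$. The elasticity is $\rho^m(S)=\sup\mathsf{L}^m(S)/\min\mathsf{L}^m(S)$, and $\rho^m(\mathfrak{N})=\sup\{\rho^m(S):S\in\mathfrak{N}\}$. *)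

From mathcomp Require Import all_boot all_order all_algebra.
From mathcomp Require Import boolp classical_sets reals constructive_ereal ereal.
Set Implicit Arguments. Unset Strict Implicit. Unset Printing Implicit Defensive.
Import Order.TTheory GRing.Theory Num.Theory.
Local Open Scope classical_set_scope.

Definition numsg (S : set nat) : Prop :=
  S 0%N /\ (forall a b, S a -> S b -> S (a + b)%N) /\
  exists N, forall n, (N <= n)%N -> S n.

Definition irreducible_sg (S : set nat) : Prop :=
  numsg S /\
  ~ (exists S1 S2 : set nat, numsg S1 /\ numsg S2 /\
       S `<` S1 /\ S `<` S2 /\ S = S1 `&` S2).

Definition bigcap_fam n (F : 'I_n -> set nat) (J : {set 'I_n}) : set nat :=
  [set x | forall j, j \in J -> F j x].

Definition is_factorization (S : set nat) n (F : 'I_n -> set nat) : Prop :=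
  (forall j, irreducible_sg (F j)) /\
  S = bigcap_fam F (finset.setTfor 'I_n) /\
  (forall J : {set 'I_n}, J != finset.set0 -> J \proper (finset.setTfor 'I_n) -> S <> bigcap_fam F J).

Definition Lm (S : set nat) : set nat :=
  [set n | (0 < n)%N /\ exists F : 'I_n -> set nat, is_factorization S F].

Definition rhom (R : realType) (S : set nat) : \bar R :=
  (ereal_sup [set (n%:R : R)%:E | n in Lm S] *
   ((fine (ereal_inf [set (n%:R : R)%:E | n in Lm S]))^-1)%:E)%E.

Definition rhom_all (R : realType) : \bar R :=
  ereal_sup [set rhom R S | S in numsg].

Definition Tsg (j : nat) : set nat :=
  [set n | n = 0%N \/ ((j.+1 %/ 2 <= n)%N /\ (n <= j.-1)%N) \/ (j.+1 <= n)%N].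

Definition gen2 (i : nat) : set nat :=
  [set n | exists x y, n = (2 * x + i * y)%N].

Definition Ssg (i : nat) : set nat := gen2 i `&` Tsg i.

From mathcomp Require Import all_boot all_order all_algebra.
From mathcomp Require Import boolp classical_sets reals constructive_ereal ereal.
From mathcomp Require Import zify lra.
Local Open Scope classical_set_scope.
Import Order.TTheory GRing.Theory Num.Theory.

(* For i = 4k + 3, S(i) has the factorization <2,i> ∩ T(i) of length 2 and the
   factorization T(2k+3) ∩ T(2k+5) ∩ ... ∩ T(4k+3) of length k + 1, all of whose
   members are symmetric hence irreducible.  So rho^m(S(i)) >= (k + 1) / 2,
   which is unbounded in k; since every S(i) is a numerical semigroup, the
   supremum of rho^m over all numerical semigroups is infinite. *)

Lemma Tsg_oddP m j n : j = (2 * m + 1)%N ->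
  Tsg j n <-> (n = 0 \/ (m.+1 <= n <= 2 * m) \/ 2 * m + 2 <= n)%N.
Proof. by move=> ->; rewrite /Tsg /=; split => h; lia. Qed.

Lemma gen2_oddP p i n : i = (2 * p + 1)%N ->
  gen2 i n <-> (n %% 2 = 0 \/ 2 * p + 1 <= n)%N.
Proof.
move=> ->; rewrite /gen2 /=; split.
  move=> [x [[|y] ->]]; first by left; lia.
  by right; have := leq_pmulr (2 * p + 1) (ltn0Sn y); lia.
move=> n_cases; have [n_even|n_odd] := eqVneq (n %% 2) 0.
  by exists (n %/ 2), 0; lia.
by exists ((n - (2 * p + 1)) %/ 2), 1; lia.
Qed.

Lemma Ssg_oddP p n : Ssg (2 * p + 1) n <->
  ((n %% 2 = 0 \/ 2 * p + 1 <= n) /\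
   (n = 0 \/ (p.+1 <= n <= 2 * p) \/ 2 * p + 2 <= n))%N.
Proof.
have E1 := gen2_oddP p _ n (erefl (2 * p + 1)%N).
have E2 := Tsg_oddP p _ n (erefl (2 * p + 1)%N).
rewrite /Ssg /=; split=> [[/E1 ? /E2 ?] | [? ?]] //.
by split; [apply/E1 | apply/E2].
Qed.

Lemma Ssg_numsg p : numsg (Ssg (2 * p + 1)).
Proof.
split; first by apply/Ssg_oddP; lia.
split; first by move=> a b /Ssg_oddP ? /Ssg_oddP ?; apply/Ssg_oddP; lia.
by exists (2 * p + 2) => n ?; apply/Ssg_oddP; lia.
Qed.

(* A numerical semigroup T strictly above S contains a gap g of S, hence
   F = g + (F - g); so two of them cannot intersect to S, which misses F. *)
Lemma symmetric_irreducible S F : numsg S -> ~ S F ->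
  (forall g, ~ S g -> (g <= F)%N /\ S (F - g)%N) -> irreducible_sg S.
Proof.
move=> sgS SNF gap_dual; split=> // -[S1 [S2 [[_ [addS1 _]] [[_ [addS2 _]]]]]].
move=> [[sub1 nsub1] [[sub2 nsub2] S12]].
suff T_F T : S `<=` T -> ~ T `<=` S ->
    (forall a b, T a -> T b -> T (a + b)%N) -> T F.
  apply: SNF; rewrite S12.
  by split; [exact: T_F sub1 nsub1 addS1 | exact: T_F sub2 nsub2 addS2].
move=> ST /existsNP[g /not_implyP[Tg Sng]] addT.
have [gF SFg] := gap_dual g Sng.
by rewrite -(subnKC gF); apply: addT => //; apply: ST.
Qed.

Lemma Tsg_irreducible m : irreducible_sg (Tsg (2 * m + 1)).
Proof.
have E n := Tsg_oddP m _ n (erefl (2 * m + 1)%N).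
apply: (@symmetric_irreducible _ (2 * m + 1)).
- split; first by apply/E; lia.
  split; first by move=> a b /E ? /E ?; apply/E; lia.
  by exists (2 * m + 2) => n ?; apply/E; lia.
- by move/E; lia.
- by move=> g /E ?; split; [|apply/E]; lia.
Qed.

Lemma gen2_irreducible p : (0 < p)%N -> irreducible_sg (gen2 (2 * p + 1)).
Proof.
move=> p_gt0; have E n := gen2_oddP p _ n (erefl (2 * p + 1)%N).
apply: (@symmetric_irreducible _ (2 * p - 1)).
- split; first by apply/E; lia.
  split; first by move=> a b [x1 [y1 ->]] [x2 [y2 ->]]; exists (x1 + x2), (y1 + y2); lia.
  by exists (2 * p + 1) => n ?; apply/E; lia.
- by move/E; lia.
- by move=> g /E ?; split; [|apply/E]; lia.
Qed.

Lemma is_factorizationP S n (F : 'I_n -> set nat) :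
  (forall j, irreducible_sg (F j)) ->
  (forall x, S x <-> forall j, F j x) ->
  (forall j0, exists x, ~ S x /\ forall j, j != j0 -> F j x) ->
  is_factorization S F.
Proof.
move=> irrF SE omit_one; split=> //; split.
  apply/seteqP; split=> x /=.
    by move/SE=> Fx j _; apply: Fx.
  by move=> Fx; apply/SE=> j; apply: Fx; rewrite finset.in_setT.
move=> J _ /properP[_ [j0 _ J_j0]] SJ.
have [x [Snx Fx]] := omit_one j0.
apply: Snx; rewrite SJ => j Jj; apply: Fx.
by apply: contraTneq Jj => ->.
Qed.

Lemma Lm_Ssg_2 p : (1 < p)%N -> Lm (Ssg (2 * p + 1)) 2.
Proof.
move=> p_gt1; split=> //.
exists (fun j : 'I_2 => if val j == 0 then gen2 (2 * p + 1) else Tsg (2 * p + 1)).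
have E1 n := gen2_oddP p _ n (erefl (2 * p + 1)%N).
have E2 n := Tsg_oddP p _ n (erefl (2 * p + 1)%N).
apply: is_factorizationP.
- case=> -[|[|//]] ? /=; [apply: gen2_irreducible; lia | exact: Tsg_irreducible].
- move=> x; split=> [[? ?] [[|[|//]] _] // | Fx].
  by split; [apply: (Fx ord0) | apply: (Fx ord_max)].
- case=> -[|[|//]] ?.
  + exists (p + 1 + p %% 2); split; first by move/Ssg_oddP; lia.
    by case=> -[|[|//]] //= ? _; apply/E2; lia.
  + exists 2; split; first by move/Ssg_oddP; lia.
    by case=> -[|[|//]] //= ? _; apply/E1; lia.
Qed.

(* S(4k+3) is the intersection of the T(j) for the odd j in [2k+3, 4k+3]:
   T(j) excludes j and nothing else of [2k+2, 4k+3]. *)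
Lemma Lm_Ssg_succ k : (0 < k)%N -> Lm (Ssg (4 * k + 3)) k.+1.
Proof.
move=> k_gt0; split=> //.
exists (fun j : 'I_k.+1 => Tsg (2 * k + 3 + 2 * j)).
have ->: (4 * k + 3 = 2 * (2 * k + 1) + 1)%N by lia.
have E j n : Tsg (2 * k + 3 + 2 * j) n <->
    (n = 0 \/ (k + j + 2 <= n <= 2 * k + 2 * j + 2) \/ 2 * k + 2 * j + 4 <= n)%N.
  by rewrite /Tsg /=; split=> ?; lia.
apply: is_factorizationP.
- move=> j; rewrite (_ : 2 * k + 3 + 2 * j = 2 * (k + 1 + j) + 1)%N; last lia.
  exact: Tsg_irreducible.
- move=> x; split=> [/Ssg_oddP Sx j | Fx].
    by apply/E; have := ltn_ord j; lia.
  apply/Ssg_oddP; move: (Fx ord_max) => /E /= x_low.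
  have [x_even|x_odd] := eqVneq (x %% 2) 0; first lia.
  have [x_mid|] := boolP (2 * k + 3 <= x <= 4 * k + 1)%N; last lia.
  have x_idx : ((x - 2 * k - 3) %/ 2 < k.+1)%N by lia.
  by have /E := Fx (Ordinal x_idx); rewrite /=; lia.
- move=> j0; exists (2 * k + 3 + 2 * j0); split.
    by move/Ssg_oddP; have := ltn_ord j0; lia.
  move=> j /eqP j_neq; apply/E.
  have : (nat_of_ord j <> j0) by move/val_inj.
  by have := ltn_ord j; have := ltn_ord j0; lia.
Qed.

Lemma rhom_ge_ratio (R : realType) {S : set nat} {a b : nat} : Lm S a -> Lm S b ->
  ((a%:R / b%:R : R)%:E <= rhom R S)%E.
Proof.
move=> La Lb; rewrite /rhom.
set L := [set (n%:R : R)%:E | n in Lm S].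
have sup_ge : ((a%:R : R)%:E <= ereal_sup L)%E by apply: ereal_sup_ubound; exists a.
have inf_le : (ereal_inf L <= (b%:R : R)%:E)%E by apply: ereal_inf_lbound; exists b.
have inf_ge1 : ((1 : R)%:E <= ereal_inf L)%E.
  by apply/ereal_infP => _ [n [n_gt0 _] <-]; rewrite lee_fin ler1n.
have /fineK inf_fin : ereal_inf L \is a fin_num.
  apply/fin_numPlt/andP; split; first exact: lt_le_trans (ltNyr 1) inf_ge1.
  exact: le_lt_trans inf_le (ltry _).
move: inf_le inf_ge1; rewrite -{}inf_fin !lee_fin => inf_le inf_ge1.
have inf_gt0 : (0 < fine (ereal_inf L))%R by apply: lt_le_trans inf_ge1.
apply: le_trans (lee_wpmul2r _ sup_ge); last by rewrite lee_fin invr_ge0 ltW.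
rewrite -EFinM lee_fin ler_wpM2l // lef_pV2 // posrE (lt_le_trans ltr01) //.
by rewrite ler1n; case: Lb.
Qed.

Lemma rhom_all_eqy (R : realType) :
  (forall B : R, exists2 S, numsg S & (B%:E < rhom R S)%E) -> rhom_all R = +oo%E.
Proof.
move=> unbounded; apply/eqyP => B _; have [S sgS ltBS] := unbounded B.
by apply: le_ereal_sup_tmp; exists (rhom R S); [exists S | exact: ltW].
Qed.

Theorem corollary2p4 (R : realType) :
  (forall B : R, exists i : nat,
      [/\ (7 <= i)%N, i %% 4 = 3 & (B%:E < rhom R (Ssg i))%E]) /\
  rhom_all R = +oo%E.
Proof.
have unbounded (B : R) : exists i : nat,
    [/\ (7 <= i)%N, i %% 4 = 3 & (B%:E < rhom R (Ssg i))%E].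
  set k := (Num.Def.truncn (2 * B)).+1.
  have k_gt0 : (0 < k)%N by [].
  have Ssg_2 : Lm (Ssg (4 * k + 3)) 2.
    by rewrite (_ : 4 * k + 3 = 2 * (2 * k + 1) + 1)%N; [apply: Lm_Ssg_2|]; lia.
  exists (4 * k + 3); split; [lia | lia |].
  apply: lt_le_trans (rhom_ge_ratio R (Lm_Ssg_succ k k_gt0) Ssg_2).
  rewrite lte_fin -[k.+1]addn1 natrD.
  have := truncnS_gt (2 * B); rewrite -/k; lra.
split=> //; apply: rhom_all_eqy => B.
have [i [i_ge7 i_mod4 ltBi]] := unbounded B.
exists (Ssg i) => //.
have -> : i = (2 * (i %/ 2) + 1)%N by lia.
exact: Ssg_numsg.
Qed.
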